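(* Let $n\ge2$ and let $\overline{x}=x_1,\dots,x_n$ be variables. For a subsequence $x_{i_1},\dots,x_{i_k}$ let $\pi_k:S^{fd}_n(\mathbb{Q})\to S^{fd}_k(\mathbb{Q})$ be the projection $\pi_k(p)=\{\exists x_{i_{k+1}},\dots,x_{i_n}\,\phi(x_1,\dots,x_n):\phi\in p\}$, where $x_{i_{k+1}},\dots,x_{i_n}$ are the remaining variables. Let $S^{<}_n(\mathbb{Q})\subseteq S^{fd}_n(\mathbb{Q})$ be the set of types $p$ with $x_1<x_2<\cdots<x_n\in p$. Then the map $\nabla:S^{<}_n(\mathbb{Q})\to S^{fd}_1(\mathbb{Q})\times S^{<}_{n-1}(\mathbb{Q})$, $\nabla(p)=\langle\pi_1(p),\pi_{n-1}(p)\rangle$, where $\pi_1$ is the projection onto $x_1$ and $\pi_{n-1}$ the projection onto $x_2,\dots,x_n$, is injective.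
   Context: We work in the theory of the dense linear order $\langle\mathbb{Q},\le\rangle$ (DLO). $S_n(\mathbb{Q})$ is the set of complete $n$-types with parameters from $\mathbb{Q}$, and $S^{fd}_n(\mathbb{Q})\subseteq S_n(\mathbb{Q})$ is the set of those types that are definable over a finite set of parameters $Q_0\subseteq\mathbb{Q}$, i.e. for every formula $\phi(\overline{x},\overline{y})$ without parameters there is a formula $\psi(\overline{y},\overline{b})$ with $\overline b$ from $Q_0$ such that $\phi(\overline{x},\overline{a})\in p\iff\psi(\overline{a},\overline{b})$ holds. *)

From mathcomp Require Import all_boot all_order all_algebra.
Set Implicit Arguments. Unset Strict Implicit. Unset Printing Implicit Defensive.
Import Order.TTheory GRing.Theory Num.Theory.
Local Open Scope ring_scope.

(* Terms: variables (de Bruijn indices) or parameters from Q. *)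
Inductive term : Type :=
| TVar : nat -> term
| TPar : rat -> term.

(* Formulas of the language {<=} (with equality).  [FEx f] binds index 0.
   At top level, free index i stands for the variable x_(i+1). *)
Inductive fml : Type :=
| FLe : term -> term -> fml
| FEq : term -> term -> fml
| FBot : fml
| FNeg : fml -> fml
| FAnd : fml -> fml -> fml
| FEx : fml -> fml.

Definition FTrue : fml := FNeg FBot.
Definition FLt (t u : term) : fml := FAnd (FLe t u) (FNeg (FEq t u)).

Definition scons (a : rat) (e : nat -> rat) : nat -> rat :=
  fun i => match i with 0%N => a | i'.+1 => e i' end.

Definition eval_t (e : nat -> rat) (t : term) : rat :=
  match t with TVar i => e i | TPar q => q end.

Fixpoint sat (e : nat -> rat) (f : fml) : Prop :=
  match f with
  | FLe t u => (eval_t e t <= eval_t e u)%R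
  | FEq t u => eval_t e t = eval_t e u
  | FBot => False
  | FNeg g => ~ sat e g
  | FAnd g h => sat e g /\ sat e h
  | FEx g => exists a : rat, sat (scons a e) g
  end.

Definition term_fvlt (n : nat) (t : term) : Prop :=
  match t with TVar i => (i < n)%N | TPar _ => True end.

Fixpoint fvlt (n : nat) (f : fml) : Prop :=
  match f with
  | FLe t u | FEq t u => term_fvlt n t /\ term_fvlt n u
  | FBot => True
  | FNeg g => fvlt n g
  | FAnd g h => fvlt n g /\ fvlt n h
  | FEx g => fvlt n.+1 g
  end.

Definition term_pfree (t : term) : Prop :=
  match t with TVar _ => True | TPar _ => False end.

Fixpoint pfree (f : fml) : Prop :=
  match f with
  | FLe t u | FEq t u => term_pfree t /\ term_pfree u
  | FBot => True
  | FNeg g => pfree g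
  | FAnd g h => pfree g /\ pfree h
  | FEx g => pfree g
  end.

Definition term_params_in (Q0 : seq rat) (t : term) : Prop :=
  match t with TVar _ => True | TPar q => q \in Q0 end.

Fixpoint params_in (Q0 : seq rat) (f : fml) : Prop :=
  match f with
  | FLe t u | FEq t u => term_params_in Q0 t /\ term_params_in Q0 u
  | FBot => True
  | FNeg g => params_in Q0 g
  | FAnd g h => params_in Q0 g /\ params_in Q0 h
  | FEx g => params_in Q0 g
  end.

(* [inst n a f] = f(x_1..x_n, a_1, a_2, ...): the free variables of index
   >= n are replaced by the parameters a 0, a 1, ... *)
Definition inst_t (d n : nat) (a : nat -> rat) (t : term) : term :=
  match t with
  | TVar i => if (i < d + n)%N then TVar i else TPar (a (i - (d + n))%N)
  | TPar q => TPar q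
  end.

Fixpoint inst_aux (d n : nat) (a : nat -> rat) (f : fml) : fml :=
  match f with
  | FLe t u => FLe (inst_t d n a t) (inst_t d n a u)
  | FEq t u => FEq (inst_t d n a t) (inst_t d n a u)
  | FBot => FBot
  | FNeg g => FNeg (inst_aux d n a g)
  | FAnd g h => FAnd (inst_aux d n a g) (inst_aux d n a h)
  | FEx g => FEx (inst_aux d.+1 n a g)
  end.

Definition inst (n : nat) (a : nat -> rat) (f : fml) : fml := inst_aux 0 n a f.

Definition ren_t (d : nat) (r : nat -> nat) (t : term) : term :=
  match t with
  | TVar i => if (i < d)%N then TVar i else TVar (d + r (i - d))%N
  | TPar q => TPar q
  end.

Fixpoint ren_aux (d : nat) (r : nat -> nat) (f : fml) : fml :=
  match f with
  | FLe t u => FLe (ren_t d r t) (ren_t d r u)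
  | FEq t u => FEq (ren_t d r t) (ren_t d r u)
  | FBot => FBot
  | FNeg g => FNeg (ren_aux d r g)
  | FAnd g h => FAnd (ren_aux d r g) (ren_aux d r h)
  | FEx g => FEx (ren_aux d.+1 r g)
  end.

Definition ren (r : nat -> nat) (f : fml) : fml := ren_aux 0 r f.

Fixpoint InL (f : fml) (s : seq fml) : Prop :=
  match s with [::] => False | g :: s' => g = f \/ InL f s' end.

Definition ftype := fml -> Prop.

(* complete n-type over Q: a complete set of formulas in x_1..x_n with
   parameters from Q that is finitely satisfiable in (Q,<=)
   (equivalently, consistent with the elementary diagram of Q). *)
Definition is_type (n : nat) (p : ftype) : Prop :=
  [/\ (forall f, p f -> fvlt n f),
      (forall f, fvlt n f -> p f \/ p (FNeg f)) &
      (forall s : seq fml, (forall f, InL f s -> p f) ->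
         exists e : nat -> rat, forall f, InL f s -> sat e f)].

(* p is definable over the finite set Q0 of parameters:
   for every parameter-free phi(x_1..x_n, y_1..y_m) there is psi(y, b) with
   b from Q0 such that phi(x, a) \in p <-> Q |= psi(a, b). *)
Definition definable_over (n : nat) (p : ftype) (Q0 : seq rat) : Prop :=
  forall (m : nat) (phi : fml), pfree phi -> fvlt (n + m) phi ->
    exists psi : fml, [/\ fvlt m psi, params_in Q0 psi &
      forall a : nat -> rat, p (inst n a phi) <-> sat a psi].

Definition in_Sfd (n : nat) (p : ftype) : Prop :=
  is_type n p /\ exists Q0 : seq rat, definable_over n p Q0.

(* the formula x_1 < x_2 < ... < x_k+1 (conjunction of consecutive <) *)
Fixpoint chain (k : nat) : fml :=
  match k with
  | 0%N => FTrue
  | k'.+1 => FAnd (chain k') (FLt (TVar k') (TVar k'.+1))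
  end.

Definition in_Slt (n : nat) (p : ftype) : Prop :=
  in_Sfd n p /\ p (chain n.-1).

Definition proj_first (p : ftype) : ftype :=
  fun psi => fvlt 1 psi /\ p psi.

(* projection onto x_2,...,x_n, renamed as x_1,...,x_(n-1) *)
Definition proj_rest (n : nat) (p : ftype) : ftype :=
  fun psi => fvlt n.-1 psi /\ p (ren S psi).

Definition nabla (n : nat) (p : ftype) : ftype * ftype :=
  (proj_first p, proj_rest n p).

From mathcomp Require Import all_boot all_order all_algebra.
From mathcomp Require Import lra.
From Stdlib Require Import FunctionalExtensionality PropExtensionality.
Set Implicit Arguments. Unset Strict Implicit. Unset Printing Implicit Defensive.
Import Order.TTheory GRing.Theory Num.Theory.
Local Open Scope ring_scope.

(* If p <> q, pick phi in p with ~ phi in q.  Whether x_i <= c and c <= x_i, for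
   a parameter c of phi, is decided by pi_1 when i = 1 and by pi_(n-1) otherwise,
   so p and q agree on these formulas; together with x_1 < ... < x_n they fix the
   order type of x_1, ..., x_n over the parameters of phi.  Realizing phi with
   finitely many of these facts from p, and ~ phi with the same facts from q, gives
   two tuples of the same order type over the parameters of phi; by back-and-forth
   in the dense order without endpoints they satisfy the same formulas, which is
   absurd. *)

Section PartialIsomorphisms.
Variable R : realFieldType.

Lemma exists_between (L U : seq R) :
  {in L & U, forall l u, l < u} ->
  exists c, {in L, forall l, l < c} /\ {in U, forall u, c < u}.
Proof.
move=> LU.
have max_le (l0 : R) : {in L, forall l, l <= \big[Num.max/l0]_(l' <- L) l'}.
  by move=> l lL; rewrite le_bigmax_seq.
have min_ge (u0 : R) : {in U, forall u, \big[Num.min/u0]_(u' <- U) u' <= u}.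
  by move=> u uU; rewrite ge_bigmin_seq.
case: L LU max_le => [|l0 L'] LU max_le; case: U LU min_ge => [|u0 U'] LU min_ge.
- by exists 0.
- exists (\big[Num.min/u0]_(u <- u0 :: U') u - 1); split=> // u /(min_ge u0); lra.
- exists (\big[Num.max/l0]_(l <- l0 :: L') l + 1); split=> // l /(max_le l0); lra.
set m := \big[Num.max/l0]_(l <- l0 :: L') l.
set M := \big[Num.min/u0]_(u <- u0 :: U') u.
have m_lt u : u \in u0 :: U' -> m < u.
  move=> uU; rewrite /m big_seq; apply: (big_ind (fun x => x < u)).
  - exact: LU (mem_head _ _) uU.
  - by move=> x y xu yu; rewrite gt_max xu yu.
  - by move=> l lL; apply: LU.
have mM : m < M.
  rewrite /M big_seq; apply: (big_ind (fun x => m < x)); first exact: m_lt (mem_head _ _).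
  - by move=> x y mx my; rewrite lt_min mx my.
  - exact: m_lt.
exists ((m + M) / 2); split=> [l /(max_le l0) | u /(min_ge u0)]; rewrite -/m -/M; lra.
Qed.

Definition partial_iso (w : seq (R * R)) : Prop :=
  {in w &, forall x y, (x.1 <= y.1) = (x.2 <= y.2)}.

Lemma partial_iso_lt w : partial_iso w ->
  {in w &, forall x y, (x.1 < y.1) = (x.2 < y.2)}.
Proof. by move=> iso_w x y xw yw; rewrite !ltNge iso_w. Qed.

Lemma partial_iso_eq w : partial_iso w ->
  {in w &, forall x y, (x.1 == y.1) = (x.2 == y.2)}.
Proof. by move=> iso_w x y xw yw; rewrite !eq_le !iso_w. Qed.

Lemma partial_iso_swap w : partial_iso w -> partial_iso (map swap_pair w).
Proof. by move=> iso_w _ _ /mapP[x xw ->] /mapP[y yw ->] /=; rewrite iso_w. Qed.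

Lemma partial_iso_cons w a b : partial_iso w ->
  {in w, forall x, (x.1 <= a) = (x.2 <= b) /\ (a <= x.1) = (b <= x.2)} ->
  partial_iso ((a, b) :: w).
Proof.
move=> iso_w ab x y; rewrite !inE => /predU1P[-> | xw] /predU1P[-> | yw] /=.
- by rewrite !lexx.
- by case: (ab _ yw).
- by case: (ab _ xw).
- exact: iso_w.
Qed.

Lemma partial_iso_extend w a : partial_iso w -> exists b, partial_iso ((a, b) :: w).
Proof.
move=> iso_w.
have [[x0 x0w /eqP <-] | a_new] := altP (@hasP _ (fun x => x.1 == a) w).
  by exists x0.2; apply: partial_iso_cons => // x xw; rewrite !iso_w.
have below_above : {in [seq x.2 | x <- w & x.1 < a] & [seq x.2 | x <- w & a < x.1],
    forall l u, l < u}.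
  move=> _ _ /mapP[x + ->] /mapP[y + ->]; rewrite !mem_filter.
  move=> /andP[xa xw] /andP[ay yw]; rewrite -(partial_iso_lt iso_w) //.
  exact: lt_trans xa ay.
have [b [lt_b b_lt]] := exists_between below_above.
exists b; apply: partial_iso_cons => // x xw.
have a_x : x.1 != a by apply: contraNneq a_new => <-; apply/hasP; exists x.
case: (ltgtP x.1 a) => [xa | ax | xa]; last by rewrite xa eqxx in a_x.
  have xb : x.2 < b by apply/lt_b/map_f; rewrite mem_filter xa.
  by rewrite (ltW xb) leNgt xb.
have bx : b < x.2 by apply/b_lt/map_f; rewrite mem_filter ax.
by rewrite (ltW bx) leNgt bx.
Qed.

Lemma partial_iso_extend_back w b : partial_iso w -> exists a, partial_iso ((a, b) :: w).
Proof.
move=> /partial_iso_swap /(partial_iso_extend b) [a /partial_iso_swap].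
by rewrite /= (mapK swap_pairK); exists a.
Qed.

End PartialIsomorphisms.

Definition term_params (t : term) : seq rat := if t is TPar c then [:: c] else [::].

Fixpoint params (f : fml) : seq rat :=
  match f with
  | FLe t u | FEq t u => term_params t ++ term_params u
  | FBot => [::]
  | FNeg g | FEx g => params g
  | FAnd g h => params g ++ params h
  end.

Lemma term_params_in_sub P P' t :
  {subset P <= P'} -> term_params_in P t -> term_params_in P' t.
Proof. by move=> sPP'; case: t => //= c /sPP'. Qed.

Lemma params_in_sub P P' f : {subset P <= P'} -> params_in P f -> params_in P' f.
Proof.
move=> sPP'; elim: f => [t u|t u||g|g IHg h IHh|g] //=;
  try by move=> [/(term_params_in_sub sPP') ? /(term_params_in_sub sPP')].
by move=> [/IHg ? /IHh].
Qed.

Lemma term_params_in_params t : term_params_in (term_params t) t.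
Proof. by case: t => //= c; rewrite mem_seq1. Qed.

Lemma params_in_params f : params_in (params f) f.
Proof.
have sub_catl (s1 s2 : seq rat) : {subset s1 <= s1 ++ s2}.
  by move=> x; rewrite mem_cat => ->.
have sub_catr (s1 s2 : seq rat) : {subset s2 <= s1 ++ s2}.
  by move=> x; rewrite mem_cat orbC => ->.
elim: f => [t u|t u||g IH|g IHg h IHh|g IH] //=.
1,2: by split; [exact: term_params_in_sub (sub_catl _ _) (term_params_in_params t)
               | exact: term_params_in_sub (sub_catr _ _) (term_params_in_params u)].
by split; [exact: params_in_sub (sub_catl _ _) IHg | exact: params_in_sub (sub_catr _ _) IHh].
Qed.

Lemma eval_t_in_graph k P (e e' : nat -> rat) (w : seq (rat * rat)) t :
  term_fvlt k t -> term_params_in P t ->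
  (forall i, (i < k)%N -> (e i, e' i) \in w) -> {in P, forall c, (c, c) \in w} ->
  (eval_t e t, eval_t e' t) \in w.
Proof. by case: t => [i|c] /= tk tP vars pars; [apply: vars | apply: pars]. Qed.

Lemma sat_partial_iso f k P (e e' : nat -> rat) (w : seq (rat * rat)) :
  fvlt k f -> params_in P f -> partial_iso w ->
  (forall i, (i < k)%N -> (e i, e' i) \in w) -> {in P, forall c, (c, c) \in w} ->
  sat e f <-> sat e' f.
Proof.
elim: f k e e' w => [t u|t u||g IH|g IHg h IHh|g IH] k e e' w /=.
- move=> [tk uk] [tP uP] iso_w vars pars.
  by rewrite (iso_w _ _ (eval_t_in_graph tk tP vars pars) (eval_t_in_graph uk uP vars pars)).
- move=> [tk uk] [tP uP] iso_w vars pars.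
  have /= tu := partial_iso_eq iso_w
    (eval_t_in_graph tk tP vars pars) (eval_t_in_graph uk uP vars pars).
  by split=> /eqP; [rewrite tu | rewrite -tu] => /eqP.
- by [].
- by move=> gk gP iso_w vars pars; apply/not_iff_compat/(IH k _ _ w).
- move=> [gk hk] [gP hP] iso_w vars pars.
  have := IHg k e e' w gk gP iso_w vars pars.
  have := IHh k e e' w hk hP iso_w vars pars.
  tauto.
(* Back-and-forth: a witness on either side extends the partial isomorphism. *)
move=> gk gP iso_w vars pars.
have sat_scons a b : partial_iso ((a, b) :: w) ->
    sat (scons a e) g <-> sat (scons b e') g.
  move=> iso_ab; apply: (IH k.+1 _ _ _ gk gP iso_ab) => [[|i] /= ik | c cP].
  - exact: mem_head.
  - by rewrite inE vars ?orbT.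
  - by rewrite inE pars ?orbT.
split=> [[a ga] | [b gb]].
- have [b iso_ab] := partial_iso_extend a iso_w.
  by exists b; apply/(sat_scons a b).
- have [a iso_ab] := partial_iso_extend_back b iso_w.
  by exists a; apply/(sat_scons a b).
Qed.

Definition same_order_type (k : nat) (P : seq rat) (e e' : nat -> rat) : Prop :=
  (forall i j, (i < k)%N -> (j < k)%N -> (e i <= e j) = (e' i <= e' j)) /\
  (forall i c, (i < k)%N -> c \in P -> (e i <= c) = (e' i <= c) /\ (c <= e i) = (c <= e' i)).

Definition order_graph (k : nat) (P : seq rat) (e e' : nat -> rat) : seq (rat * rat) :=
  [seq (e i, e' i) | i <- iota 0 k] ++ [seq (c, c) | c <- P].

Lemma partial_iso_order_graph k P e e' :
  same_order_type k P e e' -> partial_iso (order_graph k P e e').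
Proof.
move=> [vars pars] x y; rewrite !mem_cat.
move=> /orP[/mapP[i + ->] | /mapP[c cP ->]] /orP[/mapP[j + ->] | /mapP[d dP ->]] /=;
  rewrite ?mem_iota ?add0n //.
- exact: vars.
- by move=> ik; case: (pars i d ik dP).
- by move=> jk; case: (pars j c jk cP).
Qed.

Lemma sat_same_order_type f k P e e' : fvlt k f -> params_in P f ->
  same_order_type k P e e' -> sat e f <-> sat e' f.
Proof.
move=> fk fP /partial_iso_order_graph iso_w.
apply: (sat_partial_iso fk fP iso_w) => [i ik | c cP]; rewrite mem_cat map_f ?orbT //.
by rewrite mem_iota add0n.
Qed.

Lemma sat_chain_lt e k i : sat e (chain k) -> (i < k)%N -> e i < e i.+1.
Proof.
elim: k => [|k IH] //= [ek [le_i ne_i]].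
rewrite ltnS leq_eqVlt => /predU1P[-> | ik]; last exact: IH.
by rewrite lt_neqAle le_i andbT; apply/eqP.
Qed.

Lemma sat_chain_le e n i j : sat e (chain n.-1) -> (i < n)%N -> (j < n)%N ->
  (e i <= e j) = (i <= j)%N.
Proof.
move=> en i_n j_n.
apply: (Order.NatMonotonyTheory.incn_inP (D := [pred i | (i < n)%N])) => //.
  by move=> a b /= _ b_n c /andP[_ cb]; exact: ltn_trans cb b_n.
by move=> a /= _ a_n; apply: (sat_chain_lt en); rewrite ltn_predRL.
Qed.

Lemma exists_common_literals (I : eqType) (lit : I -> fml) (X : seq I) (p q : ftype) :
  {in X, forall x, [/\ p (lit x) \/ p (FNeg (lit x)),
                       p (lit x) -> q (lit x) & p (FNeg (lit x)) -> q (FNeg (lit x))]} ->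
  exists D : seq fml, (forall g, InL g D -> p g /\ q g) /\
    {in X, forall x, InL (lit x) D \/ InL (FNeg (lit x)) D}.
Proof.
elim: X => [|x X IH] agree; first by exists [::].
have [D [Dpq Ddec]] : exists D : seq fml, (forall g, InL g D -> p g /\ q g) /\
    {in X, forall x, InL (lit x) D \/ InL (FNeg (lit x)) D}.
  by apply: IH => y yX; apply: agree; rewrite inE yX orbT.
have [l [pl ql l_x]] : exists l, [/\ p l, q l & l = lit x \/ l = FNeg (lit x)].
  have [[px | pnx] pq pnq] := agree x (mem_head x X).
  - by exists (lit x); split; auto.
  - by exists (FNeg (lit x)); split; auto.
exists (l :: D); split=> [g /= [<- | /Dpq] // | y].
rewrite inE => /predU1P[-> | /Ddec] /=; last tauto.
by case: l_x => <-; tauto.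
Qed.

Lemma sat_decided_literal (e e' : nat -> rat) D g :
  (forall h, InL h D -> sat e h /\ sat e' h) -> InL g D \/ InL (FNeg g) D ->
  sat e g <-> sat e' g.
Proof. by move=> satD [/satD | /satD] /=; tauto. Qed.

Definition nabla_visible (n : nat) (g : fml) : Prop :=
  fvlt 1 g \/ exists2 h, fvlt n.-1 h & g = ren S h.

Lemma nabla_visible_neg n g : nabla_visible n g -> nabla_visible n (FNeg g).
Proof. by case=> [g1 | [h hn ->]]; [left | right; exists (FNeg h)]. Qed.

Lemma nabla_eq_visible n p q g :
  nabla n p = nabla n q -> nabla_visible n g -> p g -> q g.
Proof.
case=> first_eq rest_eq [g1 | [h hn ->]] pg.
- by have [] : proj_first q g by rewrite -first_eq.
- by have [] : proj_rest n q h by rewrite -rest_eq.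
Qed.

Definition cut (x : bool * nat * rat) : fml :=
  let: (b, i, c) := x in if b then FLe (TVar i) (TPar c) else FLe (TPar c) (TVar i).

Lemma cut_visible n b i c : (i < n)%N -> nabla_visible n (cut (b, i, c)).
Proof.
case: i => [|i] i_n; first by left; case: b.
right; exists (cut (b, i, c)); last by case: b; rewrite /ren /= subn0 add0n.
by case: b; rewrite /= ltn_predRL.
Qed.

Lemma nabla_eq_subset n p q : in_Slt n p -> in_Slt n q -> nabla n p = nabla n q ->
  forall f, p f -> q f.
Proof.
move=> [[[p_fv p_complete p_sat] _] p_chain] [[[_ q_complete q_sat] _] q_chain] E f pf.
have [// | qnf] := q_complete f (p_fv f pf).
set X := [seq (bi, c) | bi <- [seq (b, i) | b <- [:: true; false], i <- iota 0 n],
                        c <- params f].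
have X_n x : x \in X -> (x.1.2 < n)%N.
  move=> /allpairsP[[[b i] c] [/allpairsP[[b' i'] [_ + [-> ->]]] _ ->]].
  by rewrite mem_iota add0n.
have cuts_agree : {in X, forall x, [/\ p (cut x) \/ p (FNeg (cut x)),
    p (cut x) -> q (cut x) & p (FNeg (cut x)) -> q (FNeg (cut x))]}.
  move=> [[b i] c] /X_n i_n; split.
  - by apply: p_complete; move: i_n; case: b.
  - exact: nabla_eq_visible E (cut_visible b c i_n).
  - exact: nabla_eq_visible E (nabla_visible_neg (cut_visible b c i_n)).
have [D [Dpq Ddec]] := exists_common_literals cuts_agree.
have [e sat_e] : exists e, forall g, InL g [:: f, chain n.-1 & D] -> sat e g.
  by apply: p_sat => g /= [<- | [<- | /Dpq []]].
have [e' sat_e'] : exists e', forall g, InL g [:: FNeg f, chain n.-1 & D] -> sat e' g.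
  by apply: q_sat => g /= [<- | [<- | /Dpq []]].
have same : same_order_type n (params f) e e'.
  split=> [i j i_n j_n | i c i_n cf].
    have e_chain : sat e (chain n.-1) by apply: sat_e; right; left.
    have e'_chain : sat e' (chain n.-1) by apply: sat_e'; right; left.
    by rewrite (sat_chain_le e_chain) // (sat_chain_le e'_chain).
  have cut_agree b : sat e (cut (b, i, c)) <-> sat e' (cut (b, i, c)).
    apply: (sat_decided_literal (D := D)).
      by move=> g gD; split; [apply: sat_e | apply: sat_e']; right; right.
    by apply: Ddec; rewrite !allpairs_f // ?mem_iota; case: b.
  by split; apply/idP/idP; [exact: (cut_agree true).1 | exact: (cut_agree true).2
                          | exact: (cut_agree false).1 | exact: (cut_agree false).2].
have e'_nf : ~ sat e' f by apply: (sat_e' (FNeg f)); left.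
by case: e'_nf; apply/(sat_same_order_type (p_fv f pf) (params_in_params f) same)/sat_e; left.
Qed.

Theorem mainTheorem13 (n : nat) (hn : (2 <= n)%N) (p q : ftype) :
  in_Slt n p -> in_Slt n q -> nabla n p = nabla n q -> p = q.
Proof.
move=> Sp Sq E; apply: functional_extensionality => f.
apply: propositional_extensionality.
by split; [apply: (nabla_eq_subset Sp Sq E) | apply: (nabla_eq_subset Sq Sp (esym E))].
Qed.
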